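(* Let $k\ge2$ and let $B$ be a $k\times k$ symmetric matrix over $\mathbb F_2$ of rank $k-2$ with every row sum $0$. Let $\Sigma_B$ be the set of $\alpha=(\alpha_1,\dots,\alpha_k)$ with $\alpha_j\in\{1,5,9,13\}$ and $\prod_j\alpha_j\equiv1\pmod8$ such that the $k\times(k+1)$ matrix $(B\mid\mathfrak b_\alpha)$ has rank $k-1$ over $\mathbb F_2$, where $\mathfrak b_\alpha=([2/\alpha_1],\dots,[2/\alpha_k])^T$. Then $\#\Sigma_B=2^{2k-2}$.
   Context: For an odd integer $a$, $[2/a]=1$ if $a\equiv\pm5\pmod8$ and $[2/a]=0$ otherwise. *)

From HB Require Import structures.
From mathcomp Require Import all_boot all_order all_algebra.
Set Implicit Arguments. Unset Strict Implicit. Unset Printing Implicit Defensive.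
Import GRing.Theory.

(* The symbol [2/a] for odd a: 1 if a = +-5 (mod 8), i.e. a mod 8 in {3,5}; 0 otherwise. *)
Definition sym2 (a : nat) : 'F_2 :=
  if (a %% 8 == 5)%N || (a %% 8 == 3)%N then 1%R else 0%R.

Definition balpha (k : nat) (alpha : 'I_k -> nat) : 'cV['F_2]_k :=
  \col_(j < k) sym2 (alpha j).

Definition SigmaB (k : nat) (B : 'M['F_2]_k) : {set {ffun 'I_k -> 'I_16}} :=
  [set alpha : {ffun 'I_k -> 'I_16} |
     [&& [forall j, (alpha j : nat) \in [:: 1; 5; 9; 13]%N],
         ((\prod_(j < k) (alpha j : nat)) %% 8 == 1)%N
       & (\rank (row_mx B (balpha (fun j => (alpha j : nat)))) == k.-1)%N]].

From HB Require Import structures.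
From mathcomp Require Import all_boot all_order all_algebra zify.
Set Implicit Arguments. Unset Strict Implicit. Unset Printing Implicit Defensive.
Import GRing.Theory.
Local Open Scope ring_scope.

(* Writing alpha_j = 1 + 4 b_j + 8 c_j with b_j, c_j in F_2 identifies the
   admissible alpha with pairs of row vectors (b, c), and then [2/alpha_j] = b_j
   while prod alpha_j = 1 (mod 8) says exactly that b has even weight.  As B is
   symmetric, rank (B | b^T) = rank B + [b not in the row space of B], so the
   rank condition says b avoids the row space of B.  Since the rows of B sum to
   zero, that space sits inside the hyperplane of even-weight vectors, leaving
   2^(k-1) - 2^(k-2) = 2^(k-2) choices for b and 2^k free choices for c. *)

Lemma card_submx (F : finFieldType) m n (A : 'M[F]_(m, n)) :
  #|[set v : 'rV[F]_n | (v <= A)%MS]| = (#|F| ^ \rank A)%N.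
Proof.
have -> : [set v : 'rV[F]_n | (v <= A)%MS] =
          [set x *m row_base A | x in [set: 'rV[F]_(\rank A)]].
  apply/setP => v; rewrite inE -(eq_row_base A); apply/idP/imsetP.
    by case/submxP=> x ->; exists x; rewrite ?inE.
  by case=> x _ ->; rewrite submxMl.
rewrite card_imset; last exact: row_free_inj (row_base_free A).
by rewrite cardsT card_mx mul1n.
Qed.

Lemma card_submx_setD (F : finFieldType) m1 m2 n
    (A : 'M[F]_(m1, n)) (C : 'M[F]_(m2, n)) : (A <= C)%MS ->
  #|[set v : 'rV[F]_n | (v <= C)%MS && ~~ (v <= A)%MS]| =
  (#|F| ^ \rank C - #|F| ^ \rank A)%N.
Proof.
move=> sAC; rewrite -!card_submx.
have -> : [set v : 'rV[F]_n | (v <= C)%MS && ~~ (v <= A)%MS] =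
          [set v | (v <= C)%MS] :\: [set v | (v <= A)%MS].
  by apply/setP => v; rewrite !inE andbC.
rewrite cardsD; congr (_ - _)%N; congr #|pred_of_set _|.
by apply/setIidPr/subsetP => v; rewrite !inE => /submx_trans->.
Qed.

Lemma mxrank_adds_row (F : fieldType) m n (A : 'M[F]_(m, n)) (v : 'rV[F]_n) :
  \rank (A + v)%MS = (\rank A + ~~ (v <= A)%MS)%N.
Proof.
have [vA | vNA] := boolP (v <= A)%MS; first by rewrite (addsmx_idPl vA) addn0.
apply/eqP; rewrite eqn_leq; apply/andP; split.
  apply: leq_trans (leq_of_leqif (mxrank_adds_leqif A v)) _.
  by rewrite leq_add2l rank_leq_row.
by rewrite addn1 (ltn_leqif (mxrank_leqif_sup (addsmxSl A v))) addsmx_sub submx_refl.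
Qed.

Lemma mxrank_row_mx_sym (F : fieldType) n (A : 'M[F]_n) (v : 'rV[F]_n) :
  A^T = A -> \rank (row_mx A v^T) = (\rank A + ~~ (v <= A)%MS)%N.
Proof.
by move=> symA; rewrite -mxrank_tr tr_row_mx trmxK symA -addsmxE mxrank_adds_row.
Qed.

Definition zero_sum_mx (F : fieldType) n : 'M[F]_n := kermx (const_mx 1 : 'cV_n).

Lemma mulmx_ones (R : pzSemiRingType) m n (A : 'M[R]_(m, n)) :
  A *m const_mx 1 = \col_i \sum_j A i j.
Proof.
by apply/matrixP => i j; rewrite !mxE; apply: eq_bigr => l _; rewrite mxE mulr1.
Qed.

Lemma sub_zero_sum_mx (F : fieldType) m n (A : 'M[F]_(m, n)) :
  (A <= zero_sum_mx F n)%MS = [forall i, \sum_j A i j == 0].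
Proof.
rewrite sub_kermx mulmx_ones; apply/eqP/forallP => [A0 i | A0].
  by have /matrixP/(_ i ord0) := A0; rewrite !mxE => ->.
by apply/matrixP => i j; rewrite !mxE (eqP (A0 i)).
Qed.

Lemma mxrank_zero_sum_mx (F : fieldType) n :
  (0 < n)%N -> \rank (zero_sum_mx F n) = n.-1.
Proof.
move=> n_gt0; rewrite mxrank_ker -subn1; congr (_ - _)%N.
apply/eqP; rewrite eqn_leq rank_leq_col lt0n mxrank_eq0.
apply/eqP => /matrixP /(_ (Ordinal n_gt0) ord0) /eqP.
by rewrite !mxE oner_eq0.
Qed.

Definition enc1mod4 (b c : 'F_2) : 'I_16 := inord (1 + 4 * b + 8 * c).

Lemma enc1mod4E b c : enc1mod4 b c = (1 + 4 * b + 8 * c)%N :> nat.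
Proof. by rewrite inordK //; case: b c => [[|[]]] // ? [[|[]]]. Qed.

Lemma sym2_enc1mod4 b c : sym2 (enc1mod4 b c) = b.
Proof.
rewrite /sym2 enc1mod4E.
by case: b c => [[|[|?]] ?] [[|[|?]] ?] //=; apply: val_inj.
Qed.

Lemma enc1mod4_mem b c : (enc1mod4 b c : nat) \in [:: 1; 5; 9; 13]%N.
Proof. by rewrite enc1mod4E; case: b c => [[|[]]] // ? [[|[]]]. Qed.

Lemma enc1mod4_inj b c b' c' : enc1mod4 b c = enc1mod4 b' c' -> (b, c) = (b', c').
Proof.
move/(congr1 val); rewrite /= !enc1mod4E => e.
have [b2 c2 b'2 c'2] : [/\ b < 2, c < 2, b' < 2 & c' < 2]%N.
  by split; apply: ltn_ord.
by congr pair; apply: val_inj => /=; lia.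
Qed.

Lemma enc1mod4_onto (a : 'I_16) : (a : nat) \in [:: 1; 5; 9; 13]%N ->
  a = enc1mod4 (inord (a %/ 4 %% 2)) (inord (a %/ 8)).
Proof.
move=> a_mem; apply: ord_inj; rewrite enc1mod4E.
by move: a_mem; rewrite !inE => /or4P[] /eqP->; rewrite !inordK.
Qed.

Lemma prod_enc1mod4_mod8 (I : Type) (r : seq I) (b c : I -> 'F_2) :
  ((\prod_(i <- r) enc1mod4 (b i) (c i)) %% 8 == 1)%N = (\sum_(i <- r) b i == 0).
Proof.
have: ((\prod_(i <- r) enc1mod4 (b i) (c i)) %% 8 = 1 + 4 * (\sum_(i <- r) b i)%R)%N.
  apply: (big_rec2 (fun p (s : 'F_2) => p %% 8 = 1 + 4 * s)%N) => // i p s _ IH.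
  rewrite -modnMmr IH enc1mod4E {IH}.
  case: (b i) s (c i) => [[|[|?]] ?] // [[|[|?]] ?] // [[|[|?]] ?] //=; lia.
by case: (\sum_(i <- r) b i) => [[|[|?]] ?] //= ->.
Qed.

Definition enc1mod4_rows k (p : 'rV['F_2]_k * 'rV['F_2]_k) : {ffun 'I_k -> 'I_16} :=
  [ffun j => enc1mod4 (p.1 0 j) (p.2 0 j)].

Lemma enc1mod4_rows_inj k : injective (@enc1mod4_rows k).
Proof.
move=> [b c] [b' c'] /ffunP e; congr pair; apply/rowP => j;
  by have := e j; rewrite !ffunE => /enc1mod4_inj [].
Qed.

Lemma balpha_enc1mod4_rows k (p : 'rV['F_2]_k * 'rV['F_2]_k) :
  balpha (fun j => (enc1mod4_rows p j : nat)) = p.1^T.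
Proof. by apply/colP => j; rewrite !mxE ffunE sym2_enc1mod4. Qed.

Lemma prod_enc1mod4_rows_mod8 k (p : 'rV['F_2]_k * 'rV['F_2]_k) :
  ((\prod_j enc1mod4_rows p j) %% 8 == 1)%N = (p.1 <= zero_sum_mx _ k)%MS.
Proof.
under eq_bigr do rewrite ffunE.
rewrite prod_enc1mod4_mod8 sub_zero_sum_mx.
by apply/idP/forallP => [p0 i | /(_ ord0)//]; rewrite (ord1 i).
Qed.

Lemma SigmaB_enc1mod4 k (B : 'M['F_2]_k) :
  SigmaB B = @enc1mod4_rows k @: setX
    [set b : 'rV_k | (b <= zero_sum_mx _ k)%MS && (\rank (row_mx B b^T) == k.-1)%N]
    [set: 'rV_k].
Proof.
apply/setP => a; rewrite inE; apply/and3P/imsetP => [[/forallP a_mem a_prod a_rank] | ].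
  pose b : 'rV['F_2]_k := \row_j inord (a j %/ 4 %% 2).
  pose c : 'rV['F_2]_k := \row_j inord (a j %/ 8).
  have a_bc : a = enc1mod4_rows (b, c).
    by apply/ffunP => j; rewrite ffunE !mxE; apply: enc1mod4_onto.
  move: a_prod a_rank.
  rewrite a_bc prod_enc1mod4_rows_mod8 balpha_enc1mod4_rows => b_sum b_rank.
  by exists (b, c); rewrite ?inE ?andbT ?b_sum ?b_rank.
case=> p; rewrite !inE andbT => /andP[p_sum p_rank] ->.
split; last by rewrite balpha_enc1mod4_rows.
  by apply/forallP => j; rewrite ffunE enc1mod4_mem.
by rewrite prod_enc1mod4_rows_mod8.
Qed.

Theorem mainTheorem9 (k : nat) (hk : (2 <= k)%N) (B : 'M['F_2]_k)
  (hsym : (B^T)%R = B) (hrank : \rank B = (k - 2)%N)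
  (hrow : forall i : 'I_k, (\sum_(j < k) B i j)%R = 0%R) :
  #|SigmaB B| = (2 ^ (2 * k - 2))%N.
Proof.
have B_sum : (B <= zero_sum_mx _ k)%MS.
  by rewrite sub_zero_sum_mx; apply/forallP => i; rewrite hrow.
have -> : SigmaB B = @enc1mod4_rows k @: setX
    [set b : 'rV_k | (b <= zero_sum_mx _ k)%MS && ~~ (b <= B)%MS] [set: 'rV_k].
  rewrite SigmaB_enc1mod4; congr (_ @: setX _ _); apply/setP => b.
  rewrite !inE mxrank_row_mx_sym // hrank.
  by case: (b <= B)%MS; rewrite andbC //=; apply/eqP; lia.
rewrite card_imset; last exact: enc1mod4_rows_inj.
rewrite cardsX cardsT card_mx card_submx_setD // card_Fp //.
rewrite mxrank_zero_sum_mx ?hrank; last lia.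
have -> : k.-1 = (k - 2).+1 by lia.
rewrite expnS mul2n -addnn addnK mul1n -expnD; congr (2 ^ _)%N; lia.
Qed.
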